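(* Let $P$ be a stochastic matrix over a countable set $\Omega$, let $C\subseteq\Omega$ and let $p=\sum_{i\in C}p_i\in\ell^\infty(\Omega)$. Then $p$ is reducing for $Arv(P)$ if and only if for every path $\gamma:\{0,\dots,\ell\}\to\Omega$ in the directed graph of $P$ with $\gamma(0),\gamma(\ell)\in C$ one has $\gamma(k)\in C$ for all $0\le k\le\ell$.
   Context: A stochastic matrix has nonnegative entries and row sums $1$; $P^{(n)}_{ij}$ is the $(i,j)$ entry of $P^n$; $p_i$ is the indicator of $\{i\}$. A path in $P$ is $\gamma:\{0,\dots,\ell\}\to\Omega$ with $P_{\gamma(k)\gamma(k+1)}>0$ for $0\le k\le\ell-1$. $Arv(P)$: $Arv(P)_0=\ell^\infty(\Omega)$; $Arv(P)_n$ ($n\ge1$) is the set of complex $\Omega\times\Omega$ matrices $A=[a_{ij}]$ with $a_{ij}=0$ whenever $P^{(n)}_{ij}=0$ and $\sup_j\sum_i|a_{ij}|^2<\infty$, a W*-correspondence over $\ell^\infty(\Omega)$ with actions by diagonal matrices and inner product $\mathrm{Diag}(A^*B)$; $U_{n,m}(A\otimes B)=(\sqrt{P^{n+m}})^{\flat}*[(\sqrt{P^n}*A)(\sqrt{P^m}*B)]$ for $n,m\ge1$ ($*$ entrywise product, $\sqrt\cdot$ entrywise, $M^\flat_{ik}=M_{ik}^{-1}$ if $M_{ik}>0$, else $0$), $U_{0,n},U_{n,0}$ module actions. A projection $p\in\ell^\infty(\Omega)$ is reducing for $Arv(P)$ if $U_{n,m}^*(p\,Arv(P)_{n+m}\,p)\subseteq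 p\,Arv(P)_n\,p\otimes p\,Arv(P)_m\,p$ for all $n,m$. *)

From HB Require Import structures.
From mathcomp Require Import all_boot all_algebra.
From mathcomp Require Import all_classical all_reals all_analysis.
From mathcomp Require Export complex.
Export GRing.Theory Num.Theory.

Set Implicit Arguments.
Unset Strict Implicit.
Unset Printing Implicit Defensive.

Local Open Scope ring_scope.
Local Open Scope classical_set_scope.

Section ArvDefs.
Variables (R : realType) (T : countType).

Definition csq (z : R[i]) : R := complex.Re z ^+ 2 + complex.Im z ^+ 2.

(* sum of a real family over a countable type (meaningful for absolutely
   summable families): positive part minus negative part *)
Definition rsum {I : choiceType} (f : I -> R) : R :=
  fine (\esum_(x in [set: I]) (Num.max (f x) 0)%:E)
  - fine (\esum_(x in [set: I]) (Num.max (- f x) 0)%:E).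

Definition csum {I : choiceType} (f : I -> R[i]) : R[i] :=
  (rsum (fun x => complex.Re (f x)))%:C%C
  + 'i%C * (rsum (fun x => complex.Im (f x)))%:C%C.

Definition stochastic (P : T -> T -> R) : Prop :=
  (forall i j, 0 <= P i j) /\
  (forall i, \esum_(j in [set: T]) (P i j)%:E = 1%E).

Fixpoint Ppow (P : T -> T -> R) (n : nat) (i j : T) : R :=
  match n with
  | 0 => if i == j then 1 else 0
  | n'.+1 => fine (\esum_(k in [set: T]) (Ppow P n' i k * P k j)%:E)
  end.

Definition flat (x : R) : R := if 0 < x then x^-1 else 0.

(* Arv(P)_n : matrices supported on {P^(n) > 0} with sup_j sum_i |a_ij|^2 < oo.
   (For n = 0 this is the diagonal matrices with bounded diagonal, i.e.
   l^oo(Omega) acting by multiplication.) *)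
Definition Arv (P : T -> T -> R) (n : nat) : set (T -> T -> R[i]) :=
  [set A | (forall i j, Ppow P n i j = 0 -> A i j = 0) /\
           exists M : R, forall j,
             (\esum_(i in [set: T]) (csq (A i j))%:E <= M%:E)%E].

(* the l^oo(Omega)-valued inner product Diag(A^* B) *)
Definition ipArv (A B : T -> T -> R[i]) (j : T) : R[i] :=
  csum (fun i => (A i j)^* * B i j).

Definition ind (C : set T) (i : T) : R[i] := if `[< C i >] then 1 else 0.

Definition compress (C : set T) (X : set (T -> T -> R[i])) :=
  [set (fun i j => ind C i * A i j * ind C j) | A in X].

(* Concrete model of the W*-correspondence tensor product E (x) F over
   l^oo(Omega), where E, F are the correspondences of matrices supported on
   the patterns S1, S2 with column-square-summable columns:
   arrays c_{i k j} (A (x) B corresponds to a_{ik} b_{kj}) supported on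
   S1 i k /\ S2 k j with sup_j sum_{i,k} |c_{ikj}|^2 < oo. *)
Definition tens (S1 S2 : T -> T -> Prop) : set (T -> T -> T -> R[i]) :=
  [set c | (forall i k j, ~ (S1 i k /\ S2 k j) -> c i k j = 0) /\
           exists M : R, forall j,
             (\esum_(ik in [set: T * T]) (csq (c ik.1 ik.2 j))%:E <= M%:E)%E].

Definition ipTens (c d : T -> T -> T -> R[i]) (j : T) : R[i] :=
  csum (fun ik : T * T => (c ik.1 ik.2 j)^* * d ik.1 ik.2 j).

Definition patArv (P : T -> T -> R) (n : nat) (i j : T) : Prop :=
  Ppow P n i j != 0.
Definition patpArvp (P : T -> T -> R) (C : set T) (n : nat) (i j : T) : Prop :=
  Ppow P n i j != 0 /\ C i /\ C j.

Definition ArvTens (P : T -> T -> R) (n m : nat) :=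
  tens (patArv P n) (patArv P m).
Definition pArvTens (P : T -> T -> R) (C : set T) (n m : nat) :=
  tens (patpArvp P C n) (patpArvp P C m).

(* U_{n,m}, extended from elementary tensors:
   U(A (x) B) = (sqrt P^{n+m})^flat * [(sqrt P^n * A)(sqrt P^m * B)] *)
Definition U (P : T -> T -> R) (n m : nat) (c : T -> T -> T -> R[i])
  : T -> T -> R[i] :=
  fun i j => (flat (Num.sqrt (Ppow P (n + m) i j)))%:C%C *
    csum (fun k => (Num.sqrt (Ppow P n i k) * Num.sqrt (Ppow P m k j))%:C%C
                   * c i k j).

(* d = U_{n,m}^* X : d is the (adjoint) element of the tensor product with
   <U c, X> = <c, d> for every c in the tensor product *)
Definition is_Uadj (P : T -> T -> R) (n m : nat) (X : T -> T -> R[i])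
  (d : T -> T -> T -> R[i]) : Prop :=
  ArvTens P n m d /\
  forall c, ArvTens P n m c -> forall j, ipArv (U P n m c) X j = ipTens c d j.

Definition reducing (P : T -> T -> R) (C : set T) : Prop :=
  forall n m (X : T -> T -> R[i]), compress C (Arv P (n + m)) X ->
    forall d, is_Uadj P n m X d -> pArvTens P C n m d.

Definition is_path (P : T -> T -> R) (l : nat) (g : nat -> T) : Prop :=
  forall k, (k < l)%N -> 0 < P (g k) (g k.+1).

End ArvDefs.

(* Pairing [U_{n,m}^* X] with an elementary tensor [e_ik (x) e_kj] shows that its
   [(i,k,j)] coefficient is a multiple of [X_ij], and it can only be nonzero when
   [P^(n)_ik P^(m)_kj > 0], i.e. when there is a path [i -> k -> j] of length [n + m].
   So if [X = p X p] and [C] is path convex, every nonzero coefficient of [U^* X] has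
   [i, j, k] in [C]: [p] is reducing.  Conversely, if a path [gamma] of length [l]
   leaves [C] at time [k], then [X = sqrt(P^(l)_{gamma 0, gamma l}) e_{gamma 0, gamma l}]
   lies in [p Arv(P)_l p], and [U_{k,l-k}^* X] is the tensor with coefficients
   [sqrt(P^(k)_{gamma 0, a} P^(l-k)_{a, gamma l})], which is nonzero at
   [a = gamma k], outside [C]. *)

From mathcomp Require Import all_boot all_algebra.
From mathcomp Require Import all_classical all_reals all_analysis.
From mathcomp Require Import order zify ring lra.
Import Order.TTheory GRing.Theory Num.Theory.

Local Open Scope ring_scope.
Local Open Scope classical_set_scope.

Section esum_facts.
Context {R : realType} {I : choiceType}.
Local Open Scope ereal_scope.

Lemma esum_supp1 (a : I -> \bar R) t :
  (forall x, x != t -> a x = 0) -> 0 <= a t ->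
  \esum_(x in [set: I]) a x = a t.
Proof.
move=> a0 at0; have a_ge0 x : [set: I] x -> 0 <= a x.
  by move=> _; case: (eqVneq x t) => [->|/a0 ->].
rewrite (esumID [set t]) // setTI esum_set1 // esum1 ?adde0 //.
by move=> x [_ /eqP/a0].
Qed.

Lemma le_term_esum (a : I -> \bar R) t :
  (forall x, 0 <= a x) -> a t <= \esum_(x in [set: I]) a x.
Proof.
move=> a0; rewrite (esumID [set t]) ?setTI ?esum_set1 //.
by rewrite leeDl // esum_ge0.
Qed.

Lemma esum_fiber_fst (a : I * I -> \bar R) i :
  (forall x, x.1 != i -> a x = 0) -> (forall x, 0 <= a x) ->
  \esum_(x in [set: I * I]) a x = \esum_(k in [set: I]) a (i, k).
Proof.
move=> a0 a_ge0; rewrite (esumID (pair i @` [set: I])) //.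
rewrite [X in _ + X]esum1 ?adde0; last first.
  move=> [x1 x2] [_ /= nfib]; apply: a0 => /=; apply/eqP => ex.
  by apply: nfib; exists x2; rewrite ?ex.
by rewrite setTI esum_image // => x y _ _ [].
Qed.

Lemma esum_mull_le (c : \bar R) (a : I -> \bar R) :
  0 <= c -> (forall x, 0 <= a x) ->
  \esum_(x in [set: I]) (c * a x) <= c * \esum_(x in [set: I]) a x.
Proof.
move=> c0 a0; apply: ge_ereal_sup => _ [X XS <-].
rewrite -ge0_mule_fsumr //; apply: lee_wpmul2l => //.
by apply: ereal_sup_ubound; exists X.
Qed.

Lemma esum_swap (a : I -> I -> \bar R) :
  (forall x y, 0 <= a x y) ->
  \esum_(x in [set: I]) \esum_(y in [set: I]) a x y =
  \esum_(y in [set: I]) \esum_(x in [set: I]) a x y.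
Proof.
move=> a0; rewrite !esum_esum //.
rewrite (reindex_esum (setT `*`` (fun=> setT)) (setT `*`` (fun=> setT))
   (fun x => (x.2, x.1))) //.
split=> [x _ //|[x1 x2] [y1 y2] _ _ /= [-> ->] //|[x1 x2] _].
by exists (x2, x1).
Qed.

End esum_facts.

Section sum_facts.
Context {R : realType} {I : choiceType}.

Lemma csq0 : csq (0 : R[i]) = 0.
Proof. by rewrite /csq /= expr0n /= addr0. Qed.

Lemma csq_ge0 (z : R[i]) : 0 <= csq z.
Proof. by rewrite /csq addr_ge0 // sqr_ge0. Qed.

Lemma conj_real_complex (x : R) : (x%:C%C)^* = x%:C%C.
Proof. exact: conjc_real. Qed.

Lemma EFin_max0_ge0 (x : R) : (0 <= (Num.max x 0)%:E)%E.
Proof. by rewrite lee_fin le_max lexx orbT. Qed.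

Lemma rsum_supp1 (f : I -> R) t : (forall x, x != t -> f x = 0) -> rsum f = f t.
Proof.
move=> f0; rewrite /rsum !(esum_supp1 _ t) ?EFin_max0_ge0 //=; last 2 first.
- by move=> x /f0 ->; rewrite oppr0 maxxx.
- by move=> x /f0 ->; rewrite maxxx.
by rewrite /preorder.Order.max; case: ifP; case: ifP; lra.
Qed.

Lemma csum_supp1 (f : I -> R[i]) t : (forall x, x != t -> f x = 0) -> csum f = f t.
Proof.
move=> f0; rewrite /csum !(rsum_supp1 _ t) => [|x /f0 ->//|x /f0 ->//].
exact/esym/complexE.
Qed.

Lemma csum_eq0 (f : I -> R[i]) : (forall x, f x = 0) -> csum f = 0.
Proof.
move=> f0; rewrite /csum /rsum !esum1 => [|x _|x _|x _|x _]; rewrite ?f0 //=.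
- by rewrite subrr mulr0 addr0.
- by rewrite oppr0 maxxx.
- by rewrite maxxx.
- by rewrite oppr0 maxxx.
- by rewrite maxxx.
Qed.

Lemma rsumN (f : I -> R) : rsum (fun x => - f x) = - rsum f.
Proof.
rewrite /rsum opprB; congr (_ - _).
by under eq_esum do rewrite opprK.
Qed.

Lemma csum_conj (f : I -> R[i]) : csum (fun x => (f x)^*) = (csum f)^*.
Proof.
rewrite /csum.
have -> : (fun x => complex.Re (f x)^*) = (fun x => complex.Re (f x)).
  by apply: funext => x; case: (f x).
have -> : (fun x => complex.Im (f x)^*) = (fun x => - complex.Im (f x)).
  by apply: funext => x; case: (f x).
rewrite rsumN; set a := rsum _; set b := rsum _.
by apply/eqP; rewrite eq_complex /=; apply/andP; split; apply/eqP; ring.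
Qed.

Lemma csum_fiber_fst (F : I * I -> R[i]) i :
  (forall x, x.1 != i -> F x = 0) -> csum F = csum (fun k => F (i, k)).
Proof.
move=> F0; rewrite /csum /rsum.
by rewrite !(esum_fiber_fst _ i) // => x; rewrite ?EFin_max0_ge0 // => /F0 ->; rewrite ?oppr0 maxxx.
Qed.

End sum_facts.

Section stochastic_matrix.
Variables (R : realType) (T : countType) (P : T -> T -> R).

Definition path_convex (C : set T) :=
  forall (l : nat) (g : nat -> T), is_path P l g ->
    C (g 0%N) -> C (g l) -> forall k, (k <= l)%N -> C (g k).

Lemma is_path_cat n m g1 g2 : is_path P n g1 -> is_path P m g2 -> g1 n = g2 0%N ->
  is_path P (n + m) (fun t => if (t <= n)%N then g1 t else g2 (t - n)%N).
Proof.
move=> g1P g2P g1g2 t /=; case: (ltngtP t n) => [ltn|gtn|->] ltm.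
- exact: g1P.
- by rewrite subSn 1?ltnW //; apply: g2P; lia.
- by rewrite g1g2 subSnn; apply: g2P; lia.
Qed.

Lemma is_path_drop {n m g} : is_path P (n + m) g -> is_path P m (fun t => g (n + t)%N).
Proof. by move=> gP t ltm; rewrite addnS; apply: gP; rewrite ltn_add2l. Qed.

Hypothesis P_ge0 : forall i j, 0 <= P i j.
Hypothesis P_row1 : forall i, (\esum_(j in [set: T]) (P i j)%:E = 1)%E.
Local Open Scope ereal_scope.

Lemma esum_mulP_le (f : T -> R) : (forall k, 0 <= f k)%R ->
  \esum_(b in [set: T]) \esum_(k in [set: T]) (f k * P k b)%:E <=
  \esum_(k in [set: T]) (f k)%:E.
Proof.
move=> f_ge0; rewrite esum_swap => [|k b]; last by rewrite lee_fin mulr_ge0.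
apply: le_esum => k _; under eq_esum do rewrite EFinM.
by rewrite -[leRHS]mule1 -(P_row1 k); apply: esum_mull_le => [|b]; rewrite lee_fin.
Qed.

(* [Ppow] is defined through [fine], so unfolding it needs the sum to be finite. *)
Lemma EFin_PpowS_of t i : (forall k, 0 <= Ppow P t i k)%R ->
  \esum_(k in [set: T]) (Ppow P t i k)%:E <= 1 ->
  forall b, (Ppow P t.+1 i b)%:E = \esum_(k in [set: T]) (Ppow P t i k * P k b)%:E.
Proof.
move=> Ppow_ge0 row_le1 b.
have term_ge0 b' k : 0 <= (Ppow P t i k * P k b')%:E by rewrite lee_fin mulr_ge0.
have col_le1 : \esum_(k in [set: T]) (Ppow P t i k * P k b)%:E <= 1.
  apply: le_trans row_le1; apply: (le_trans _ (esum_mulP_le _ Ppow_ge0)).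
  pose S b' := \esum_(k in [set: T]) (Ppow P t i k * P k b')%:E.
  by apply: (le_term_esum S) => b'; apply: esum_ge0.
by rewrite /= fineK // ge0_fin_numE ?esum_ge0 // (le_lt_trans col_le1) ?ltry.
Qed.

Lemma Ppow_ge0_esum_le1 t i : (forall k, 0 <= Ppow P t i k)%R /\
  \esum_(k in [set: T]) (Ppow P t i k)%:E <= 1.
Proof.
elim: t i => [|t IH] i.
  split=> [k /=|]; first by case: ifP.
  by rewrite (esum_supp1 _ i) /= ?eqxx // => k; rewrite eq_sym => /negPf ->.
have [Ppow_ge0 row_le1] := IH i.
have PpowSE := EFin_PpowS_of _ _ Ppow_ge0 row_le1; split.
  by move=> b; rewrite -lee_fin PpowSE esum_ge0 // => k _; rewrite lee_fin mulr_ge0.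
by under eq_esum do rewrite PpowSE; apply: le_trans row_le1; exact: esum_mulP_le.
Qed.

Lemma Ppow_ge0 t i k : (0 <= Ppow P t i k)%R.
Proof. by have [->] := Ppow_ge0_esum_le1 t i. Qed.

Lemma Ppow_le1 t i k : (Ppow P t i k <= 1)%R.
Proof.
have [_ row_le1] := Ppow_ge0_esum_le1 t i.
rewrite -lee_fin (le_trans _ row_le1) //.
by apply: (le_term_esum (fun k => (Ppow P t i k)%:E)) => k'; rewrite lee_fin Ppow_ge0.
Qed.

Lemma EFin_PpowS t i b :
  (Ppow P t.+1 i b)%:E = \esum_(k in [set: T]) (Ppow P t i k * P k b)%:E.
Proof. by have [Ppow_ge0 row_le1] := Ppow_ge0_esum_le1 t i; apply: EFin_PpowS_of. Qed.

Lemma Ppow_mulP_le t i k b : (Ppow P t i k * P k b <= Ppow P t.+1 i b)%R.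
Proof.
rewrite -lee_fin EFin_PpowS.
by apply: (le_term_esum (fun k => (Ppow P t i k * P k b)%:E)) => k'; rewrite lee_fin mulr_ge0 ?Ppow_ge0.
Qed.

Lemma Ppow_path_gt0 {l g} : is_path P l g ->
  forall t, (t <= l)%N -> (0 < Ppow P t (g 0%N) (g t))%R.
Proof.
move=> gP; elim=> [|t IH] ltl; first by rewrite /= eqxx ltr01.
apply: lt_le_trans (Ppow_mulP_le t (g 0%N) (g t) (g t.+1)).
by rewrite mulr_gt0 ?IH ?gP // ltnW.
Qed.

Lemma Ppow_neq0_path n i j : Ppow P n i j != 0%R ->
  exists g, [/\ is_path P n g, g 0%N = i & g n = j].
Proof.
elim: n j => [|n IH] j.
  by rewrite /=; case: (eqVneq i j) => [<- _|_]; [exists (fun=> i)|rewrite eqxx].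
move=> PpowS_neq0.
have [k term_neq0] : exists k, (Ppow P n i k * P k j != 0)%R.
  apply/not_existsP => all0; move: PpowS_neq0; rewrite -eqe EFin_PpowS esum1 ?eqxx //.
  by move=> k _; apply/eqP; rewrite eqe; apply/negPn/negP/all0.
move: term_neq0; rewrite mulf_eq0 negb_or => /andP[Ppow_neq0 P_neq0].
have [g [gP g0 gn]] := IH k Ppow_neq0.
exists (fun t => if (t <= n)%N then g t else j); split; rewrite /= ?ltnn //.
move=> t ltn1; case: (ltngtP t n) => [ltn|gtn|->]; [exact: gP|lia|].
by rewrite gn lt_neqAle eq_sym P_neq0 P_ge0.
Qed.

Local Close Scope ereal_scope.

Definition etens (i k j : T) : T -> T -> T -> R[i] :=
  fun a b c => if (a == i) && (b == k) && (c == j) then 1 else 0.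

Definition pointmx (i j : T) (z : R[i]) : T -> T -> R[i] :=
  fun a b => if (a == i) && (b == j) then z else 0.

Lemma compress_supp {C} {Y : set (T -> T -> R[i])} {X i j} :
  compress C Y X -> X i j != 0 -> C i /\ C j.
Proof.
move=> [A _ <-]; rewrite /ind.
by case: asboolP; case: asboolP => // _ _; rewrite ?mulr0 ?mul0r eqxx.
Qed.

Lemma compress_of_supp C (Y : set (T -> T -> R[i])) X :
  Y X -> (forall i j, X i j != 0 -> C i /\ C j) -> compress C Y X.
Proof.
move=> YX XC; exists X => //; apply: funext => i; apply: funext => j.
have [->|/XC[Ci Cj]] := eqVneq (X i j) 0; first by rewrite mulr0 mul0r.
by rewrite /ind !asboolT // mul1r mulr1.
Qed.

Lemma Arv_pointmx t i j z : Ppow P t i j != 0 -> Arv P t (pointmx i j z).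
Proof.
move=> Ppow_neq0; split=> [a b|].
  by rewrite /pointmx; case: eqP => [->|//]; case: eqP => [->|//] /eqP; rewrite (negPf Ppow_neq0).
exists (csq z) => b; rewrite (esum_supp1 _ i).
- by rewrite /pointmx eqxx /=; case: eqP; rewrite lee_fin ?csq0 ?csq_ge0.
- by move=> a /negPf; rewrite /pointmx => ->; rewrite csq0.
- by rewrite lee_fin csq_ge0.
Qed.

Lemma ArvTens_etens {n m i k j} :
  patArv P n i k -> patArv P m k j -> ArvTens P n m (etens i k j).
Proof.
move=> ik kj; split=> [a b c|].
  by rewrite /etens; case: ifP => // /andP[/andP[/eqP-> /eqP->] /eqP->] [].
exists 1 => c; rewrite (esum_supp1 _ (i, k)) /=.
- rewrite /etens !eqxx /=; case: eqP => _; rewrite lee_fin ?csq0 //.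
  by rewrite /csq /= expr1n expr0n addr0.
- by move=> [a b]; rewrite xpair_eqE /etens /= => /negPf ->; rewrite csq0.
- by rewrite lee_fin csq_ge0.
Qed.

Lemma Uadj_etens {n m X d i k j} : is_Uadj P n m X d ->
  patArv P n i k -> patArv P m k j -> d i k j = (U P n m (etens i k j) i j)^* * X i j.
Proof.
move=> [_ dU] ik kj; have := dU _ (ArvTens_etens ik kj) j.
rewrite /ipArv /ipTens (csum_supp1 _ i) => [|a /negPf ai]; last first.
  rewrite /U csum_eq0 ?mulr0 ?rmorph0 ?mul0r // => b.
  by rewrite /etens ai mulr0.
rewrite (csum_supp1 _ (i, k)) => [|[a b]]; last first.
  by rewrite xpair_eqE /etens /= => /negPf ->; rewrite rmorph0 mul0r.
by rewrite /etens /= !eqxx rmorph1 mul1r => ->.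
Qed.

Lemma Uadj_supp {n m X d i k j} : is_Uadj P n m X d -> d i k j != 0 ->
  [/\ patArv P n i k, patArv P m k j & X i j != 0].
Proof.
move=> dadj d_neq0; have [[dsupp _] _] := dadj.
have [ik kj] : patArv P n i k /\ patArv P m k j.
  by apply: contrapT => not_supp; move: d_neq0; rewrite dsupp ?eqxx.
split=> //; apply: contra d_neq0 => /eqP X0.
by rewrite (Uadj_etens dadj ik kj) X0 mulr0.
Qed.

Lemma Ppow_neq0_path_through {n m i k j} : patArv P n i k -> patArv P m k j ->
  exists g, [/\ is_path P (n + m) g, g 0%N = i, g n = k & g (n + m)%N = j].
Proof.
move=> /Ppow_neq0_path[g1 [g1P g10 g1n]] /Ppow_neq0_path[g2 [g2P g20 g2m]].
have g1g2 : g1 n = g2 0%N by rewrite g1n g20.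
exists (fun t => if (t <= n)%N then g1 t else g2 (t - n)%N).
split; rewrite /= ?leq0n ?leqnn //; first exact: is_path_cat.
case: leqP => [|_]; last by rewrite addKn.
by rewrite -{2}[n]addn0 leq_add2l leqn0 => /eqP m0; subst m; rewrite addn0 g1g2.
Qed.

Lemma reducing_of_path_convex C : path_convex C -> reducing P C.
Proof.
move=> convexC n m X pXp d dadj; have [[_ dbound] _] := dadj.
split=> // i k j not_supp; apply/eqP/negPn/negP => d_neq0; apply: not_supp.
have [ik kj Xij_neq0] := Uadj_supp dadj d_neq0.
have [Ci Cj] := compress_supp pXp Xij_neq0.
have [g [gP g0 gn gnm]] := Ppow_neq0_path_through ik kj.
have Ck : C k by rewrite -gn; apply: convexC gP _ _ _ _; rewrite ?g0 ?gnm ?leq_addr.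
by do !split.
Qed.

Definition Uadj_pointmx n m (i j : T) : T -> T -> T -> R[i] :=
  fun a k b => if (a == i) && (b == j) then
    (Num.sqrt (Ppow P n i k) * Num.sqrt (Ppow P m k j))%:C%C else 0.

Lemma ArvTens_Uadj_pointmx n m i j : ArvTens P n m (Uadj_pointmx n m i j).
Proof.
split=> [a k b|].
  rewrite /Uadj_pointmx; case: ifP => // /andP[/eqP-> /eqP->] not_supp.
  have [ik0|ik] := eqVneq (Ppow P n i k) 0; first by rewrite ik0 sqrtr0 mul0r.
  have [kj0|kj] := eqVneq (Ppow P m k j) 0; first by rewrite kj0 sqrtr0 mulr0.
  by case: not_supp.
exists 1 => b; rewrite (esum_fiber_fst _ i) => [|[a k] /negPf ai|x]; first last.
- by rewrite lee_fin csq_ge0.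
- by rewrite /Uadj_pointmx ai csq0.
have [->|/negPf bj] := eqVneq b j; last first.
  by rewrite esum1 // => k _; rewrite /Uadj_pointmx bj andbF csq0.
have [_ row_le1] := Ppow_ge0_esum_le1 n i; apply: le_trans row_le1.
apply: le_esum => k _; rewrite /Uadj_pointmx !eqxx lee_fin /csq /= expr0n addr0.
by rewrite exprMn !sqr_sqrtr ?Ppow_ge0 // ler_piMr ?Ppow_ge0 ?Ppow_le1.
Qed.

Lemma is_Uadj_pointmx {n m i j} : 0 < Ppow P (n + m) i j ->
  is_Uadj P n m (pointmx i j (Num.sqrt (Ppow P (n + m) i j))%:C%C) (Uadj_pointmx n m i j).
Proof.
move=> ij_gt0; split=> [|c _ b]; first exact: ArvTens_Uadj_pointmx.
rewrite /ipArv /ipTens; have [->|/negPf bj] := eqVneq b j; last first.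
  by rewrite !csum_eq0 // => [[a k]|a]; rewrite /pointmx /Uadj_pointmx bj andbF mulr0.
rewrite (csum_supp1 _ i) => [|a /negPf ai]; last by rewrite /pointmx ai mulr0.
rewrite (csum_fiber_fst _ i) => [|[a k] /negPf ai]; last by rewrite /Uadj_pointmx /= ai mulr0.
rewrite /pointmx /Uadj_pointmx !eqxx /= /U /flat sqrtr_gt0 ij_gt0.
rewrite rmorphM /= conj_real_complex -csum_conj mulrAC -rmorphM /= mulVf ?rmorph1 ?mul1r.
  by congr csum; apply: funext => k; rewrite rmorphM /= conj_real_complex mulrC.
by rewrite gt_eqF // sqrtr_gt0.
Qed.

Lemma path_convex_of_reducing C : reducing P C -> path_convex C.
Proof.
move=> redC l g gP C0 Cl k le_kl; apply: contrapT => nCk.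
rewrite -(subnKC le_kl) in gP Cl; set m := (l - k)%N in gP Cl.
have ij_gt0 := Ppow_path_gt0 gP _ (leqnn _).
have ik_gt0 := Ppow_path_gt0 gP _ (leq_addr m k).
have kj_gt0 := Ppow_path_gt0 (is_path_drop gP) _ (leqnn m); rewrite addn0 in kj_gt0.
pose X := pointmx (g 0%N) (g (k + m)%N) (Num.sqrt (Ppow P (k + m) (g 0%N) (g (k + m)%N)))%:C%C.
have pXp : compress C (Arv P (k + m)) X.
  apply: compress_of_supp => [|a b]; first by apply: Arv_pointmx; rewrite gt_eqF.
  by rewrite /X /pointmx; case: ifP => [/andP[/eqP-> /eqP->]|]; rewrite ?eqxx.
have [dsupp _] := redC k m X pXp _ (is_Uadj_pointmx ij_gt0).
have /eqP := dsupp (g 0%N) (g k) (g (k + m)%N) (fun '(conj (conj _ (conj _ Ck)) _) => nCk Ck).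
rewrite /Uadj_pointmx !eqxx /= eq_complex /= eqxx andbT mulf_eq0 !sqrtr_eq0.
by rewrite !leNgt ik_gt0 kj_gt0.
Qed.

End stochastic_matrix.

Theorem mainTheorem13 (R : realType) (T : countType) (P : T -> T -> R)
  (C : set T) :
  stochastic P ->
  (reducing P C <->
   (forall (l : nat) (g : nat -> T), is_path P l g ->
      C (g 0%N) -> C (g l) -> forall k, (k <= l)%N -> C (g k))).
Proof.
move=> [P_ge0 P_row1]; split.
- exact: path_convex_of_reducing.
- exact: reducing_of_path_convex.
Qed.
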